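(* Let $n,m$ be positive integers, $V=\{1,\dots,n\}$, and let $CCP$ be the cycle clustering polytope for $V$ and $m$ clusters (defined in the context). Let $K=\{(i_1,i_2),(i_2,i_3),\dots,(i_{\ell-1},i_\ell),(i_\ell,i_1)\}$ be a directed cycle on distinct vertices $i_1,\dots,i_\ell\in V$ with $1<\ell<m$, and let $U\subsetneq K$ be a strict subset. Then the extended subtour inequality $$\sum_{(i,j)\in K} z_{i,j}+\sum_{(i,j)\in U} y_{i,j}\le |K|-1$$ is valid for $CCP$.
   Context: Let $V=\{1,\dots,n\}$, $E=\{\{i,j\}: i,j\in V, i\neq j\}$, $A=\{(i,j)\in V\times V: i\neq j\}$, and $\mathcal{K}=\{1,\dots,m\}$. Cluster indices are taken cyclically: $x_{i,m+1}=x_{i,1}$ and $x_{i,0}=x_{i,m}$. There are binary variables $x_{i,s}$ ($i\in V$, $s\in\mathcal{K}$), $y_{i,j}$ for each $\{i,j\}\in E$ with $i<j$ (with the shorthand $y_{j,i}=y_{i,j}$), and $z_{i,j}$ for each $(i,j)\in A$. The cycle clustering polytope $CCP$ is the convex hull of all binary $(x,y,z)$ satisfying: $\sum_{s\in\mathcal{K}} x_{i,s}=1$ for all $i\in V$; $\sum_{i\in V}x_{i,s}\ge 1$ for all $s\in\mathcal{K}$; $y_{i,j}+z_{i,j}+z_{j,i}\le 1$ for all $\{i,j\}\in E$; $x_{i,s}+x_{j,s}-y_{i,j}+z_{i,j}-x_{j,s+1}-x_{i,s-1}\le 1$ for all $(i,j)\in A$, $s\in\mathcal{K}$; and $x_{i,s}+x_{j,s+1}-z_{i,j}+y_{i,j}-x_{j,s}-x_{i,s+1}\le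 1$ for all $(i,j)\in A$, $s\in\mathcal{K}$. *)

From HB Require Import structures.
From mathcomp Require Import all_boot all_order all_algebra.
Set Implicit Arguments. Unset Strict Implicit. Unset Printing Implicit Defensive.
Import Order.TTheory GRing.Theory Num.Theory.
Local Open Scope ring_scope.

(* The coordinate y_{i,j}
   exists only for i < j; entries [cy i j] with i >= j (and [cz i i]) are
   dummy coordinates that no constraint or inequality ever reads. *)
Record ccpoint (R : Type) (n m : nat) := CCPoint {
  cx : 'I_n -> 'I_m -> R;
  cy : 'I_n -> 'I_n -> R;
  cz : 'I_n -> 'I_n -> R }.

Definition yv (R : Type) (n m : nat) (p : ccpoint R n m) (i j : 'I_n) : R :=
  if (i < j)%N then cy p i j else cy p j i.

Definition is01 (R : numDomainType) (a : R) : Prop := a = 0 \/ a = 1.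

(* binary points satisfying the defining constraints of CCP;
   cluster indices are cyclic: s+1 is [ordS s], s-1 is [ord_pred s]. *)
Definition ccp_feasible (R : numDomainType) (n m : nat) (p : ccpoint R n m) : Prop :=
  [/\ (forall (i : 'I_n) (s : 'I_m), is01 (cx p i s)),
      (forall i j : 'I_n, (i < j)%N -> is01 (cy p i j)) &
      (forall i j : 'I_n, i != j -> is01 (cz p i j))] /\
  [/\ (forall i : 'I_n, \sum_(s < m) cx p i s = 1),
      (forall s : 'I_m, 1 <= \sum_(i < n) cx p i s),
      (forall i j : 'I_n, (i < j)%N -> cy p i j + cz p i j + cz p j i <= 1),
      (forall i j : 'I_n, i != j -> forall s,
         cx p i s + cx p j s - yv p i j + cz p i j
           - cx p j (ordS s) - cx p i (ord_pred s) <= 1) &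
      (forall i j : 'I_n, i != j -> forall s,
         cx p i s + cx p j (ordS s) - cz p i j + yv p i j
           - cx p j s - cx p i (ordS s) <= 1)].

Definition in_CCP (R : numDomainType) (n m : nat) (p : ccpoint R n m) : Prop :=
  exists (k : nat) (lam : 'I_k -> R) (P : 'I_k -> ccpoint R n m),
    [/\ (forall t : 'I_k, ccp_feasible (P t)),
        (forall t : 'I_k, 0 <= lam t) &
        \sum_(t < k) lam t = 1] /\
    [/\ 
        (forall (i : 'I_n) (s : 'I_m), cx p i s = \sum_(t < k) lam t * cx (P t) i s),
        (forall i j : 'I_n, cy p i j = \sum_(t < k) lam t * cy (P t) i j) &
        (forall i j : 'I_n, cz p i j = \sum_(t < k) lam t * cz (P t) i j)].

From HB Require Import structures.
From mathcomp Require Import all_boot all_order all_algebra zify lra.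
Import Order.TTheory GRing.Theory Num.Theory.
Set Implicit Arguments. Unset Strict Implicit.
Local Open Scope ring_scope.

(* By convexity it suffices to treat a binary feasible point.  There every
   vertex i lies in exactly one cluster c(i); an arc with z_{ij} = 1 moves
   from c(i) to c(i)+1, and an arc with y_{ij} = 1, z_{ij} = 0 stays in c(i).
   Every arc of K contributes at most 1 to the left-hand side.  If all of them
   contributed 1, going once around K would raise the cluster index by the
   number of z-arcs, which must then be a multiple of m; as |K| < m it is 0,
   so every arc is a y-arc and lies in U, contradicting U <> K. *)

Lemma ordS_neq m (i : 'I_m) : (1 < m)%N -> ordS i != i.
Proof.
move=> hm; apply/negP=> /eqP /(congr1 val) /=.
have := ltn_ord i; case: (ltnP i.+1 m) => h1 h2.
  by rewrite modn_small //; lia.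
have -> : i.+1 = m by lia.
by rewrite modnn; lia.
Qed.

Lemma ord_pred_neq m (i : 'I_m) : (1 < m)%N -> ord_pred i != i.
Proof.
move=> hm; apply/negP=> /eqP E.
by have := ordS_neq (ord_pred i) hm; rewrite ord_predK E eqxx.
Qed.

Lemma sum_increments_cycle ell m (f d : 'I_ell -> nat) :
  (forall t, f (ordS t) = f t + d t %[mod m]) -> \sum_(t < ell) d t = 0 %[mod m].
Proof.
move=> step.
have shift : \sum_(t < ell) f (ordS t) = \sum_(t < ell) f t.
  by symmetry; exact: (reindex_inj (@ordS_inj ell)).
apply/eqP; rewrite -(eqn_modDl (\sum_(t < ell) f t)) addn0 -big_split /=.
rewrite -shift; apply/eqP.
by rewrite -[RHS]modn_summ (eq_bigr _ (fun t _ => step t)) modn_summ.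
Qed.

Lemma is01_indicator (R : numDomainType) m (a : 'I_m -> R) :
  (forall s, is01 (a s)) -> \sum_(s < m) a s = 1 ->
  exists c, forall s, a s = (s == c)%:R.
Proof.
move=> a01 sum1.
have [c ac] : exists c, a c = 1.
  case: (pickP (fun c => a c == 1)) => [c /eqP ac | no1]; first by exists c.
  have : \sum_(s < m) a s = 0.
    by apply: big1 => s _; case: (a01 s) => // as1; have := no1 s; rewrite as1 eqxx.
  by rewrite sum1 => /eqP; rewrite oner_eq0.
exists c => s; case: eqP => [-> | /eqP sc]; first by rewrite ac.
have : \sum_(k < m | k != c) a k = 0.
  by apply: (addrI 1); rewrite addr0 -[RHS]sum1 [RHS](bigD1 c) //= ac.
move/psumr_eq0P; apply => // k _.
by case: (a01 k) => ->; rewrite ?ler01.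
Qed.

Lemma sum_le_pred_card (R : numDomainType) (I : finType) (a : I -> R) (t0 : I) :
  a t0 <= 0 -> (forall t, a t <= 1) -> \sum_t a t <= #|I|.-1%:R.
Proof.
move=> a0 a1; rewrite (bigD1 t0) //= -[_.-1%:R]add0r.
apply: lerD => //; apply: (le_trans (ler_sum _ (fun t _ => a1 t))).
by rewrite sumr_const cardC1.
Qed.

Lemma convex_sum_le (R : numDomainType) (I J : finType) (lam : J -> R)
    (f : J -> I -> R) (g : I -> R) (beta : R) :
  (forall q, 0 <= lam q) -> \sum_q lam q = 1 ->
  (forall t, g t = \sum_q lam q * f q t) -> (forall q, \sum_t f q t <= beta) ->
  \sum_t g t <= beta.
Proof.
move=> lam0 lam1 gE fle; under eq_bigr do rewrite gE.
rewrite exchange_big /= -[beta]mul1r -lam1 mulr_suml.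
by apply: ler_sum => q _; rewrite -mulr_sumr ler_wpM2l.
Qed.

Definition arc_weight (R : numDomainType) n m (p : ccpoint R n m) (b : bool)
    (i j : 'I_n) : R :=
  cz p i j + (if b then yv p i j else 0).

Section FeasiblePoint.
Variables (R : realFieldType) (n m : nat) (P : ccpoint R n m).
Hypothesis hP : ccp_feasible P.

Lemma feasible_cluster : exists c : 'I_n -> 'I_m, forall i s, cx P i s = (s == c i)%:R.
Proof.
have [[x01 _ _] [xsum _ _ _ _]] := hP.
have /fin_all_exists [c hc] i : exists c, forall s, cx P i s = (s == c)%:R.
  exact: is01_indicator (x01 i) (xsum i).
by exists c.
Qed.

Lemma feasible_cz01 i j : i != j -> is01 (cz P i j).
Proof. by have [[_ _ z01] _] := hP; apply: z01. Qed.

Lemma feasible_yv01 i j : i != j -> is01 (yv P i j).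
Proof.
have [[_ y01 _] _] := hP; rewrite /yv => ij.
by case: ltngtP => [/y01 | /y01 | /val_inj eij] //; rewrite eij eqxx in ij.
Qed.

Lemma feasible_yv_cz_le i j : i != j -> yv P i j + cz P i j <= 1.
Proof.
move=> ij; have [_ [_ _ yz _ _]] := hP.
have ji : j != i by rewrite eq_sym.
have cz_ji : 0 <= cz P j i by case: (feasible_cz01 ji) => ->; rewrite ?ler01.
rewrite /yv; case: ltngtP => [/yz | /yz | /val_inj eij]; [lra | lra |].
by rewrite eij eqxx in ij.
Qed.

Lemma feasible_arc_weight_le1 b i j : i != j -> arc_weight P b i j <= 1.
Proof.
move=> ij; have := feasible_yv_cz_le ij; rewrite /arc_weight.
by case: b; case: (feasible_cz01 ij) => ->; case: (feasible_yv01 ij) => ->; lra.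
Qed.

Lemma feasible_arc_weight_pos_cz i j :
  i != j -> 0 < arc_weight P false i j -> cz P i j = 1.
Proof.
by move=> ij; rewrite /arc_weight addr0; case: (feasible_cz01 ij) => ->; rewrite ?ltxx.
Qed.

Variable c : 'I_n -> 'I_m.
Hypotheses (hc : forall i s, cx P i s = (s == c i)%:R) (hm : (1 < m)%N).

Lemma cluster_ordS_of_cz i j : i != j -> cz P i j = 1 -> c j = ordS (c i).
Proof.
move=> ij zij; have [_ [_ _ _ cut _]] := hP.
have := feasible_yv_cz_le ij; have := cut i j ij (c i).
rewrite !hc eqxx (negbTE (ord_pred_neq (c i) hm)) zij.
case: (ordS (c i) =P c j) => [-> // | _].
by case: (c i == c j) => /= ineq yz; exfalso; lra.
Qed.

Lemma cluster_eq_of_yv i j : i != j -> yv P i j = 1 -> cz P i j = 0 -> c j = c i.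
Proof.
move=> ij yij zij; have [_ [_ _ _ _ cut]] := hP.
have := cut i j ij (c i).
rewrite !hc eqxx (negbTE (ordS_neq (c i) hm)) zij yij.
case: (c i =P c j) => [-> // | _].
by case: (ordS (c i) == c j) => /= ineq; exfalso; lra.
Qed.

Lemma cluster_step_of_arc_weight b i j : i != j -> 0 < arc_weight P b i j ->
  (c j = c i + (cz P i j == 1%R) %[mod m])%N.
Proof.
move=> ij; rewrite /arc_weight; case: (feasible_cz01 ij) => zij; rewrite zij.
  rewrite add0r eq_sym oner_eq0 addn0; case: b; last by rewrite ltxx.
  case: (feasible_yv01 ij) => yij; first by rewrite yij ltxx.
  by rewrite (cluster_eq_of_yv ij yij zij).
by rewrite eqxx (cluster_ordS_of_cz ij zij) /= modn_mod addn1.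
Qed.

End FeasiblePoint.

Section Subtour.
Variables (R : realFieldType) (n m ell : nat) (v : 'I_ell -> 'I_n).
Variables (U : {set 'I_ell}) (P : ccpoint R n m).
Hypotheses (hv : injective v) (hell1 : (1 < ell)%N) (hP : ccp_feasible P).

Lemma cycle_arc_neq t : v t != v (ordS t).
Proof. by rewrite (inj_eq hv) eq_sym ordS_neq. Qed.

Hypotheses (hell2 : (ell < m)%N) (hU : U \proper [set: 'I_ell]).

Lemma subtour_zero_arc : exists t0, arc_weight P (t0 \in U) (v t0) (v (ordS t0)) <= 0.
Proof.
have [c hc] := feasible_cluster hP.
have hm : (1 < m)%N by lia.
case: (pickP (fun t => arc_weight P (t \in U) (v t) (v (ordS t)) <= 0)) => [t0 | allpos].
  by exists t0.
have pos t : 0 < arc_weight P (t \in U) (v t) (v (ordS t)) by rewrite ltNge allpos.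
pose d t := nat_of_bool (cz P (v t) (v (ordS t)) == 1).
have sum_d_mod := @sum_increments_cycle _ _ (fun t => c (v t)) d
  (fun t => cluster_step_of_arc_weight hP hc hm (cycle_arc_neq t) (pos t)).
have d_le : (\sum_(t < ell) d t <= ell)%N.
  rewrite -[X in (_ <= X)%N]card_ord -sum1_card.
  by apply: leq_sum => t _; rewrite /d; case: (_ == _).
case/properP: hU => _ [t1 _ t1U].
have d1 : d t1 = 1%N.
  have := pos t1; rewrite (negbTE t1U).
  by move=> /(feasible_arc_weight_pos_cz hP (cycle_arc_neq t1)) z1; rewrite /d z1 eqxx.
move: sum_d_mod; rewrite mod0n modn_small; last by lia.
by rewrite (bigD1 t1) //= d1.
Qed.

Lemma subtour_weight_le :
  \sum_(t < ell) arc_weight P (t \in U) (v t) (v (ordS t)) <= ell%:R - 1.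
Proof.
have [t0 w0] := subtour_zero_arc.
have -> : ell%:R - 1 = #|'I_ell|.-1%:R :> R.
  by rewrite card_ord -{1}(prednK (ltnW hell1)) mulrSr addrK.
apply: (sum_le_pred_card (a := fun t => arc_weight P (t \in U) (v t) (v (ordS t))) w0).
by move=> t; apply: feasible_arc_weight_le1 => //; exact: cycle_arc_neq.
Qed.

End Subtour.

Lemma arc_weight_mix (R : numDomainType) n m k (lam : 'I_k -> R)
    (p : ccpoint R n m) (P : 'I_k -> ccpoint R n m) :
  (forall i j, cy p i j = \sum_q lam q * cy (P q) i j) ->
  (forall i j, cz p i j = \sum_q lam q * cz (P q) i j) ->
  forall b i j, arc_weight p b i j = \sum_q lam q * arc_weight (P q) b i j.
Proof.
move=> yE zE b i j; rewrite /arc_weight /yv zE.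
under [RHS]eq_bigr do rewrite mulrDr.
rewrite big_split /=; congr (_ + _); case: b; first by case: ifP.
by rewrite big1 // => q _; rewrite mulr0.
Qed.

Theorem mainTheorem5 (R : realFieldType) (n m : nat) (hn : (0 < n)%N) (hm : (0 < m)%N)
  (ell : nat) (v : 'I_ell -> 'I_n) (hv : injective v)
  (hell1 : (1 < ell)%N) (hell2 : (ell < m)%N)
  (U : {set 'I_ell}) (hU : U \proper [set: 'I_ell])
  (p : ccpoint R n m) (hp : in_CCP p) :
  \sum_(t < ell) cz p (v t) (v (ordS t)) + \sum_(t in U) yv p (v t) (v (ordS t))
    <= ell%:R - 1.
Proof.
case: hp => k [lam [P [[hP lam0 lam1] [_ yE zE]]]].
rewrite [X in _ + X]big_mkcond -big_split /=.
apply: (convex_sum_le lam0 lam1 (fun t => arc_weight_mix yE zE _ _ _)) => q.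
exact: subtour_weight_le.
Qed.
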